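(* Let $k\ge 0$ and $n\ge 1$ be integers, and let $x=(x_1,x_2)$ and $y=(y_1,y_2)$ be distinct points of $\mathbb{Z}^2$ with $|x_1-y_1|<n-2k$ and $|x_2-y_2|<n-2k$. Then \[\pi_n\big(B_{\mathbb{Z}^2}[x,k]\cap B_{\mathbb{Z}^2}[y,k]\big)=\pi_n\big(B_{\mathbb{Z}^2}[x,k]\big)\cap\pi_n\big(B_{\mathbb{Z}^2}[y,k]\big).\]
   Context: $\mathbb{Z}^2$ carries the $l^1$ metric $d((a,b),(a',b'))=|a-a'|+|b-b'|$, and $B_{\mathbb{Z}^2}[x,k]=\{z\in\mathbb{Z}^2: d(x,z)\le k\}$. $\pi_n:\mathbb{Z}^2\to\mathbb{Z}^2/(n\mathbb{Z}\times n\mathbb{Z})$ is the quotient map reducing both coordinates mod $n$. *)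

From Stdlib Require Import ZArith.
Open Scope Z_scope.

Definition pt := (Z * Z)%type.

Definition dist1 (p q : pt) : Z := Z.abs (fst p - fst q) + Z.abs (snd p - snd q).

Definition ball (x : pt) (k : Z) : pt -> Prop := fun z => dist1 x z <= k.

(* The quotient Z^2 / (nZ x nZ), represented by canonical residues in
   {0..n-1}^2 (for n >= 1); pi_n reduces both coordinates mod n. *)
Definition pi (n : Z) (p : pt) : pt := (fst p mod n, snd p mod n).

Definition pi_img (n : Z) (A : pt -> Prop) : pt -> Prop :=
  fun c => exists z, A z /\ pi n z = c.

(* Two points w in B[x,k] and u in B[y,k] differ in each coordinate by at most
   k + |x_i - y_i| + k < n, so pi_n w = pi_n u forces w = u: the only way the two
   images can meet is in the image of a common point of the two balls. *)

From Stdlib Require Import ZArith Lia.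
Open Scope Z_scope.

Lemma Zmod_eq_small_diff (a b n : Z) :
  0 < n -> a mod n = b mod n -> Z.abs (a - b) < n -> a = b.
Proof.
  intros Hn Hmod Hab.
  assert (Hdiv : (n | a - b)).
  { apply Z.mod_divide; [lia|].
    now rewrite Zminus_mod, Hmod, Z.sub_diag. }
  destruct (Z.eq_dec (a - b) 0) as [Hz | Hnz]; [lia|].
  apply Z.divide_abs_r, Z.divide_pos_le in Hdiv; lia.
Qed.

Lemma pi_eq_close (n : Z) (w u : pt) :
  0 < n -> pi n w = pi n u ->
  Z.abs (fst w - fst u) < n -> Z.abs (snd w - snd u) < n -> w = u.
Proof.
  destruct w as [w1 w2], u as [u1 u2]; unfold pi; cbn.
  intros Hn Hpi H1 H2; injection Hpi as E1 E2.
  now rewrite (Zmod_eq_small_diff w1 u1 n), (Zmod_eq_small_diff w2 u2 n).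
Qed.

Lemma ball_fst (x : pt) (k : Z) (z : pt) :
  ball x k z -> Z.abs (fst x - fst z) <= k.
Proof. unfold ball, dist1; lia. Qed.

Lemma ball_snd (x : pt) (k : Z) (z : pt) :
  ball x k z -> Z.abs (snd x - snd z) <= k.
Proof. unfold ball, dist1; lia. Qed.

Lemma pi_eq_balls (k n : Z) (x y w u : pt) :
  0 < n ->
  Z.abs (fst x - fst y) < n - 2 * k ->
  Z.abs (snd x - snd y) < n - 2 * k ->
  ball x k w -> ball y k u -> pi n w = pi n u -> w = u.
Proof.
  intros Hn H1 H2 Hw Hu Hpi.
  apply (pi_eq_close n); [assumption | assumption | |].
  - pose proof (ball_fst x k w Hw); pose proof (ball_fst y k u Hu); lia.
  - pose proof (ball_snd x k w Hw); pose proof (ball_snd y k u Hu); lia.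
Qed.

Theorem lemma5p4 (k n : Z) (x y : pt) :
  0 <= k -> 1 <= n -> x <> y ->
  Z.abs (fst x - fst y) < n - 2 * k ->
  Z.abs (snd x - snd y) < n - 2 * k ->
  forall c : pt,
    pi_img n (fun z => ball x k z /\ ball y k z) c <->
    (pi_img n (ball x k) c /\ pi_img n (ball y k) c).
Proof.
  intros _ Hn _ H1 H2 c; split.
  - intros [z [[Bx By] Hz]]; split; exists z; auto.
  - intros [[w [Bw Hw]] [u [Bu Hu]]].
    assert (Hwu : w = u).
    { apply (pi_eq_balls k n x y); try assumption; [lia | congruence]. }
    subst u; exists w; auto.
Qed.
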